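(* Let $X$ be a discrete random variable with alphabet $\mathcal{X}$ and law $p_X$, let $f:\mathcal{X}\to\mathcal{Y}$ be a deterministic function (the encoder), and let $Y=f(X)$ (the bitstream). Let $\hat{X}=g(Y)$ be a reconstruction produced by a (possibly stochastic) decoder $g$ such that, conditionally on $Y$, $\hat{X}$ is distributed according to the posterior $p_{X|Y}$, i.e. for every $y$ with $p_Y(Y=y)\neq 0$, $\hat{X}$ given $Y=y$ has law $p_{X|Y}(\cdot\mid Y=y)$. Then $f(\hat{X})=Y$ almost surely.
   Context: Such a codec (deterministic encoder, decoder sampling from the posterior of the source given the code) is called a conditional generative model-based image codec. A codec is called idempotent if re-encoding the reconstruction gives back the same code, i.e. $f(\hat{X})=Y$. *)

From HB Require Import structures.
From mathcomp Require Import all_boot all_order all_algebra.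
From mathcomp Require Import all_classical all_reals all_analysis.
Set Implicit Arguments. Unset Strict Implicit. Unset Printing Implicit Defensive.
Import Order.TTheory GRing.Theory Num.Theory.
Local Open Scope classical_set_scope.
Local Open Scope ring_scope.

(* Elementary conditional probability P(A | B) = P(A ∩ B) / P(B), real-valued
   (probability measures are finite, so fine is harmless). *)
Definition cprob (d : measure_display) (Omega : measurableType d) (R : realType)
  (P : probability Omega R) (A B : set Omega) : R :=
  fine (P (A `&` B)) / fine (P B).

From HB Require Import structures.
From mathcomp Require Import all_boot all_order all_algebra.
From mathcomp Require Import all_classical all_reals all_analysis.
Import Order.TTheory GRing.Theory Num.Theory.
Local Open Scope classical_set_scope.
Local Open Scope ring_scope.

(* If [f x' <> y], the events [X = x'] and [f X = y] are disjoint, so the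
   posterior assigns probability 0 to [Xhat = x'] given [f X = y]; hence
   [P (Xhat = x', f X = y) = 0], trivially so when [P (f X = y) = 0].  The
   event [f Xhat <> f X] is the countable union of these null events over
   [x'] and [y = f x]. *)

Lemma negligible_bigcup_countable {d} {T : sigmaRingType d} {R : realFieldType}
    (mu : {measure set T -> \bar R}) {I : countType} (F : I -> set T) :
  (forall i, mu.-negligible (F i)) -> mu.-negligible (\bigcup_i F i).
Proof.
move=> negF.
apply: (negligibleS (A := \bigcup_k if unpickle k is Some i then F i else set0)).
  by move=> t [i _ Fit]; exists (pickle i) => //; rewrite pickleK.
apply: negligible_bigcup => k.
by case: unpickle => [i|]; [exact: negF | exact: negligible_set0].
Qed.

Lemma measurable_preimage_countable {d} {T : measurableType d} {I : countType}
    {X : T -> I} : (forall i, measurable [set t | X t = i]) ->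
  forall A : set I, measurable (X @^-1` A).
Proof.
move=> mX A.
have -> : X @^-1` A = \bigcup_i if pselect (A i) then [set t | X t = i] else set0.
  apply/seteqP; split=> [t At | t [i _]].
    by exists (X t) => //; case: pselect.
  by case: pselect => // Ai; rewrite /preimage /= => ->.
apply: countable_bigcupT_measurable; first exact: countableP.
by move=> i; case: pselect => ?; [exact: mX | exact: measurable0].
Qed.

Section conditional_probability.
Context {d} {T : measurableType d} {R : realType} (P : probability T R).

Lemma cprob_disjoint (A B : set T) : A `&` B = set0 -> cprob P A B = 0.
Proof. by move=> AB0; rewrite /cprob AB0 measure0 mul0r. Qed.

Lemma cprob_eq0 (A B : set T) : measurable A -> measurable B -> P B != 0%E ->
  (cprob P A B == 0) = (P (A `&` B) == 0%E).
Proof.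
move=> mA mB PB0; rewrite /cprob mulf_eq0 invr_eq0.
rewrite !fine_eq0 ?fin_num_measure //; last exact: measurableI.
by rewrite (negbTE PB0) orbF.
Qed.

End conditional_probability.

Section posterior_sampling.
Context {d} {Omega : measurableType d} {R : realType} {P : probability Omega R}.
Context {AX : countType} {AY : Type} {f : AX -> AY} {X Xhat : Omega -> AX}.
Hypothesis mX : forall x : AX, measurable [set w | X w = x].
Hypothesis mXhat : forall x : AX, measurable [set w | Xhat w = x].
Hypothesis posterior : forall y : AY, P [set w | f (X w) = y] != 0%E ->
  forall x : AX,
    cprob P [set w | Xhat w = x] [set w | f (X w) = y] =
    cprob P [set w | X w = x] [set w | f (X w) = y].

Lemma measurable_code_fiber (y : AY) : measurable [set w | f (X w) = y].
Proof. exact (measurable_preimage_countable mX (f @^-1` [set y])). Qed.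

Lemma posterior_mismatch_null (x' : AX) (y : AY) : f x' <> y ->
  P ([set w | Xhat w = x'] `&` [set w | f (X w) = y]) = 0%E.
Proof.
move=> fx'y.
have [PY0|PY0] := eqVneq (P [set w | f (X w) = y]) 0%E.
  by apply/eqP; rewrite -measure_le0 -PY0 measureIr //; exact: measurable_code_fiber.
apply/eqP; rewrite -cprob_eq0 //; last exact: measurable_code_fiber.
rewrite posterior // cprob_disjoint //.
by apply/seteqP; split=> w // [/= -> ].
Qed.

Lemma mismatch_negligible (x' : AX) (y : AY) :
  P.-negligible [set w | Xhat w = x' /\ f (X w) = y /\ f x' <> y].
Proof.
have [fx'y|fx'y] := pselect (f x' = y).
  by apply: negligibleS (negligible_set0 P) => w [_ []].
apply: (negligibleS (A := [set w | Xhat w = x'] `&` [set w | f (X w) = y])).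
  by move=> w [? []].
apply/negligibleP; last exact: posterior_mismatch_null.
exact: measurableI (mXhat x') (measurable_code_fiber y).
Qed.

End posterior_sampling.

Theorem theorem1 (d : measure_display) (Omega : measurableType d) (R : realType)
  (P : probability Omega R)
  (AX : countType) (AY : Type) (f : AX -> AY)
  (X Xhat : Omega -> AX)
  (mX : forall x : AX, measurable [set w | X w = x])
  (mXhat : forall x : AX, measurable [set w | Xhat w = x])
  (posterior : forall y : AY, P [set w | f (X w) = y] != 0%E ->
     forall x : AX,
       cprob P [set w | Xhat w = x] [set w | f (X w) = y] =
       cprob P [set w | X w = x] [set w | f (X w) = y]) :
  {ae P, forall w, f (Xhat w) = f (X w)}.
Proof.
pose mismatch (p : AX * AX) :=
  [set w | Xhat w = p.2 /\ f (X w) = f p.1 /\ f p.2 <> f p.1].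
apply: (negligibleS (A := \bigcup_p mismatch p)).
  by move=> w /= fXw; exists (X w, Xhat w).
apply: negligible_bigcup_countable => -[x x'].
exact: mismatch_negligible mX mXhat posterior x' (f x).
Qed.
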